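(* For each integer $n \ge 0$, define $D_{a,n} = \overline{D}(-\tfrac12 + 5\cdot 2^{2n+1}, 2^{-(2n+4)})$ and $D_{b,n} = \overline{D}(-\tfrac12 + 7\cdot 2^{2n+1}, 2^{-(2n+4)})$. Then every $z \in \mathbb{Q}_2$ lying in $D_{a,n}$ or $D_{b,n}$ for some $n \ge 0$ has a bounded forward orbit under $f_1(z) = 3z^3 - \tfrac92 z^2 + 1$.
   Context: Let $|\cdot|$ denote the $2$-adic absolute value on $\mathbb{C}_2$, normalized by $|2| = 1/2$. The notation $\overline{D}(a,\delta)$ denotes the closed disk $\{z \in \mathbb{C}_2 : |z-a| \le \delta\}$. Here $f_1$ is the member with $t=1$ of the family $f_t(z) = -\tfrac32 t(-2z^3+3z^2)+1$. *)

(* Q_2 is modelled via 2-adic Cauchy sequences of rationals. *)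
From HB Require Import structures.
From mathcomp Require Import all_boot all_order all_algebra.
Set Implicit Arguments. Unset Strict Implicit. Unset Printing Implicit Defensive.
Import Order.TTheory GRing.Theory Num.Theory.
Local Open Scope ring_scope.

Definition abs2 (q : rat) : rat :=
  if q == 0 then 0
  else (2%:R ^+ logn 2 `|denq q|%N) / (2%:R ^+ logn 2 `|numq q|%N).

(* q is a Cauchy sequence for the 2-adic absolute value:
   such sequences represent the elements of Q_2 (the completion). *)
Definition cauchy2 (q : nat -> rat) : Prop :=
  forall e : rat, 0 < e -> exists N : nat, forall m n : nat,
    (N <= m)%N -> (N <= n)%N -> abs2 (q m - q n) < e.

(* For the element z of Q_2 represented by q and a rational radius r > 0:
   |z - c|_2 <= r  iff  eventually |q k - c|_2 <= r
   (|q k - c|_2 is eventually constant equal to |z - c|_2 when z <> c,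
    and tends to 0 when z = c). *)
Definition in_cdisk2 (q : nat -> rat) (c r : rat) : Prop :=
  exists N : nat, forall k : nat, (N <= k)%N -> abs2 (q k - c) <= r.

Definition f_t (t z : rat) : rat :=
  - (3%:R / 2%:R) * t * (- 2%:R * z ^+ 3 + 3%:R * z ^+ 2) + 1.
Definition f1 (z : rat) : rat := f_t 1 z.

(* Since f1 is a polynomial, the sequence k |-> f1^[n] (q k) represents
   f1^[n](z) in Q_2.  The forward orbit of z is bounded iff there is B > 0
   with |f1^[n](z)|_2 <= B for all n. *)
Definition bounded_orbit2 (f : rat -> rat) (q : nat -> rat) : Prop :=
  exists B : rat, 0 < B /\ forall n : nat, exists N : nat, forall k : nat,
    (N <= k)%N -> abs2 (iter n f (q k)) <= B.

Definition center_a (n : nat) : rat := - (1 / 2%:R) + 5%:R * 2%:R ^+ (2 * n + 1).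
Definition center_b (n : nat) : rat := - (1 / 2%:R) + 7%:R * 2%:R ^+ (2 * n + 1).
Definition radius (n : nat) : rat := (2%:R ^+ (2 * n + 4))^-1.

From mathcomp Require Import all_boot all_order all_algebra.
From mathcomp Require Import ring zify.
Import Order.TTheory GRing.Theory Num.Theory.
Local Open Scope ring_scope.

(* Write Z_(2) for the rationals with odd denominator and D(c, k) for the disk
   c + 2^k Z_(2).  Substituting z = -1/2 + y turns f1 into
   y |-> 27/4 y - 9 y^2 + 3 y^3, and since 27 * 5 = 7 and 27 * 7 = 5 modulo 8,
   f1 maps D_{a,n+1} into D_{b,n} and D_{b,n+1} into D_{a,n}.  The orbit then
   reaches D_{a,0} or D_{b,0}, which lie on the cycles
   D_{a,0} -> D(3, 2) -> D_{a,0} and D_{b,0} -> D(2, 2) -> D(7, 4) -> D_{a,0}.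
   All points z of these disks satisfy 2 z \in Z_(2), hence |z|_2 <= 2; this
   holds for the rational approximants q k as soon as they enter the disk. *)

Definition Z2 (x : rat) : Prop := exists a c : int, x = a%:~R / (2 * c + 1)%:~R.

Lemma odd_intr_neq0 (c : int) : (2 * c + 1)%:~R != 0 :> rat.
Proof. by rewrite intr_eq0; apply/eqP; lia. Qed.

Lemma odd_ratr_neq0 (c : int) : 2 * c%:~R + 1 != 0 :> rat.
Proof. by have := odd_intr_neq0 c; rewrite rmorphD rmorphM. Qed.

Lemma int_parity (a : int) : exists e, a = 2 * e \/ a = 2 * e + 1.
Proof.
exists (a %/ 2)%Z; have := divz_eq a 2.
have := modz_ge0 a (isT : 2 != 0 :> int); have := ltz_pmod a (isT : 0 < 2 :> int).
lia.
Qed.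

Lemma even_mul_add_odd (a c : int) : exists e, a * (a + (2 * c + 1)) = 2 * e.
Proof.
have [e [->|->]] := int_parity a.
- by exists (e * (2 * e + 2 * c + 1)); ring.
- by exists ((2 * e + 1) * (e + c + 1)); ring.
Qed.

Lemma Z2_nat (n : nat) : Z2 n%:R.
Proof. by exists n, 0; rewrite mulr0 add0r divr1. Qed.

Lemma Z2N x : Z2 x -> Z2 (- x).
Proof. by case=> a [c ->]; exists (- a), c; rewrite rmorphN mulNr. Qed.

Lemma Z2D x y : Z2 x -> Z2 y -> Z2 (x + y).
Proof.
case=> a [c ->] [b [d ->]].
exists (a * (2 * d + 1) + b * (2 * c + 1)), (2 * c * d + c + d).
rewrite addf_div ?odd_intr_neq0 // -!intrM -intrD.
by congr (_ / _%:~R); ring.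
Qed.

Lemma Z2M x y : Z2 x -> Z2 y -> Z2 (x * y).
Proof.
case=> a [c ->] [b [d ->]].
exists (a * b), (2 * c * d + c + d).
rewrite mulf_div -!intrM.
by congr (_ / _%:~R); ring.
Qed.

Lemma Z2X x n : Z2 x -> Z2 (x ^+ n).
Proof. by move=> Zx; elim: n => [|n IH]; [exact: Z2_nat 1 | rewrite exprS; apply: Z2M]. Qed.

Lemma Z2_half_mulS x : Z2 x -> Z2 (x * (x + 1) / 2).
Proof.
case=> a [c ->]; have [e He] := even_mul_add_odd a c.
exists e, (2 * c ^+ 2 + 2 * c).
have -> : e%:~R = (a * (a + (2 * c + 1)))%:~R / 2 :> rat by rewrite He intrM; field.
rewrite (_ : 2 * (2 * c ^+ 2 + 2 * c) + 1 = (2 * c + 1) ^+ 2); last by ring.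
rewrite rmorphXn /= intrM [(a + _)%:~R]intrD.
by field; exact: odd_ratr_neq0.
Qed.

(* Syntax-directed, so that unification never unfolds arithmetic on rat. *)
Ltac Z2_closure :=
  repeat match goal with
  | |- Z2 _ => assumption
  | |- Z2 1 => exact: Z2_nat 1
  | |- Z2 _%:R => exact: Z2_nat
  | |- Z2 (_ + _) => apply: Z2D
  | |- Z2 (- _) => apply: Z2N
  | |- Z2 (_ * (_ + 1) / 2) => apply: Z2_half_mulS
  | |- Z2 (_ * _) => apply: Z2M
  | |- Z2 (_ ^+ _) => apply: Z2X
  end.

Lemma dvdn2_numq_denq (x : rat) : ~~ ((2 %| `|numq x|) && (2 %| `|denq x|))%N.
Proof.
apply/andP => -[dvd2_num dvd2_den].
have /eqP gcd1 := coprime_num_den x.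
have : (2 %| gcdn `|numq x| `|denq x|)%N by rewrite dvdn_gcd dvd2_num dvd2_den.
by rewrite gcd1.
Qed.

Lemma Z2_of_abs2_le (x : rat) (v : nat) : abs2 x <= (2 ^+ v)^-1 ->
  exists2 u, Z2 u & x = 2 ^+ v * u.
Proof.
have [->|x0] := eqVneq x 0; first by exists 0; rewrite ?mulr0 //; exact: Z2_nat 0.
rewrite /abs2 (negPf x0) -!natrX.
set ld := logn 2 `|denq x|; set ln := logn 2 `|numq x|.
move=> le_x.
have le_ld_ln : (ld + v <= ln)%N.
  rewrite -(leq_exp2l _ _ (isT : (1 < 2)%N)) expnD -(ler_nat rat) natrM.
  by rewrite ler_pdivrMr ?ltr0n ?expn_gt0 // mulrC ler_pdivlMr ?ltr0n ?expn_gt0 // in le_x.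
have num_gt0 : (0 < `|numq x|)%N by rewrite absz_gt0 numq_eq0.
have den_gt0 : (0 < `|denq x|)%N by rewrite absz_gt0 denq_eq0.
have den_odd : odd `|denq x|.
  rewrite -[odd _]negbK -dvdn2; apply/negP => dvd2_den.
  have : (0 < ln)%N.
    apply: leq_trans le_ld_ln.
    by rewrite addn_gt0 logn_gt0 mem_primes dvd2_den den_gt0.
  rewrite logn_gt0 mem_primes => /and3P [_ _ dvd2_num].
  by have := dvdn2_numq_denq x; rewrite dvd2_num dvd2_den.
have [m num_m] : exists m, numq x = m * 2 ^+ v.
  apply/dvdzP; rewrite dvdzE abszX pfactor_dvdn //.
  exact: leq_trans (leq_addl ld v) le_ld_ln.
exists (m%:~R / (denq x)%:~R).
  exists m, (`|denq x|./2)%:Z; congr (_ / _%:~R).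
  have := odd_double_half `|denq x|; have := denq_gt0 x.
  by rewrite den_odd -muln2; move: (`|denq x|./2) => h; lia.
by rewrite -[x in LHS]divq_num_den num_m intrM rmorphXn natrX; ring.
Qed.

Lemma logn2_denq_le1 (x : rat) : Z2 (2 * x) -> (logn 2 `|denq x| <= 1)%N.
Proof.
case=> r [c def2x]; rewrite leqNgt; apply/negP => ld_gt1.
have x_def : x = r%:~R / (2 * (2 * c + 1))%:~R.
  by rewrite intrM invfM mulrCA -def2x mulKf.
have den_gt0 : (0 < `|denq x|)%N by rewrite absz_gt0 denq_eq0.
have dvd4_den : (2 ^ 2 %| `|denq x|)%N by rewrite pfactor_dvdn.
have cross : numq x * (2 * (2 * c + 1)) = r * denq x.
  apply: (@intr_inj rat); rewrite !intrM numqE x_def; field.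
  exact: odd_ratr_neq0.
have [t den_t] : exists t, denq x = t * 4 by apply/dvdzP; rewrite dvdzE.
have [u num_u] : exists u, numq x = 2 * u + 1.
  have [e [num_e|num_e]] := int_parity (numq x); last by exists e.
  have := dvdn2_numq_denq x.
  by rewrite num_e abszM dvdn_mulr // (dvdn_trans _ dvd4_den).
(* the left side of [cross] is 2 modulo 4, the right side 0 *)
by move: cross; rewrite num_u den_t; lia.
Qed.

Lemma abs2_le2 (x : rat) : Z2 (2 * x) -> abs2 x <= 2.
Proof.
move=> /logn2_denq_le1 ld_le1.
have [->|x0] := eqVneq x 0; first by rewrite /abs2 eqxx ler0n.
rewrite /abs2 (negPf x0) -!natrX ler_pdivrMr ?ltr0n ?expn_gt0 // -natrM ler_nat.
by rewrite (leq_trans (leq_pexp2l _ ld_le1)) // leq_pmulr ?expn_gt0.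
Qed.

Definition disk2 (c : rat) (k : nat) (z : rat) : Prop :=
  exists2 u, Z2 u & z = c + 2 ^+ k * u.

Lemma disk2_of_abs2_le (z c : rat) (v : nat) :
  abs2 (z - c) <= (2 ^+ v)^-1 -> disk2 c v z.
Proof. by move/Z2_of_abs2_le => [u Zu zc]; exists u; rewrite // -zc addrC subrK. Qed.

Lemma Z2_double_disk2 (c z : rat) (k : nat) : Z2 (2 * c) -> disk2 c k z -> Z2 (2 * z).
Proof. by move=> Zc [u Zu ->]; rewrite mulrDr mulrA; Z2_closure. Qed.

Definition center (s : rat) (n : nat) : rat := - (1 / 2%:R) + s * 2%:R ^+ (2 * n + 1).

Lemma Z2_double_center (s : rat) (n : nat) : Z2 s -> Z2 (2 * center s n).
Proof.
move=> Zs; rewrite /center mulrDr mulrN mul1r mulfV ?pnatr_eq0 // mulrA.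
by Z2_closure.
Qed.

Lemma f1_center_descend (s t : rat) (n : nat) (z : rat) :
  Z2 s -> Z2 ((27 * s - t) / 8) ->
  disk2 (center s n.+1) (2 * n.+1 + 4) z -> disk2 (center t n) (2 * n + 4) (f1 z).
Proof.
move=> Zs Zst [u Zu ->]; set p : rat := 2 ^+ (2 * n); set w := s + 8 * u.
exists ((27 * s - t) / 8 + 27 * u - 36 * p * w ^+ 2 + 96 * p ^+ 2 * w ^+ 3).
  by rewrite /w /p; Z2_closure.
have pow2 k m : (m = 2 * n + k)%N -> (2 : rat) ^+ m = 2 ^+ k * p.
  by move=> ->; rewrite exprD mulrC.
rewrite /center (pow2 3 (2 * n.+1 + 1)) ?(pow2 6 (2 * n.+1 + 4)) ?(pow2 1 (2 * n + 1))
  ?(pow2 4 (2 * n + 4)); try lia.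
by rewrite /w /f1 /f_t; field.
Qed.

Lemma f1_center_a0 (z : rat) : disk2 (center_a 0) 4 z -> disk2 3 2 (f1 z).
Proof.
move=> [u Zu ->]; set w := 5 + 8 * u.
exists (16 + 27 * u - 9 * w ^+ 2 + 6 * w ^+ 3); first by rewrite /w; Z2_closure.
by rewrite /w /center_a /f1 /f_t; field.
Qed.

Lemma f1_center_b0 (z : rat) : disk2 (center_b 0) 4 z -> disk2 2 2 (f1 z).
Proof.
move=> [u Zu ->]; set w := 7 + 8 * u.
exists (23 + 27 * u - 9 * w ^+ 2 + 6 * w ^+ 3); first by rewrite /w; Z2_closure.
by rewrite /w /center_b /f1 /f_t; field.
Qed.

(* In this and the next step, the 2-adic integrality of the witness rests on
   u (u + 1) being even. *)
Lemma f1_disk_3_2 (z : rat) : disk2 3 2 z -> disk2 (center_a 0) 4 (f1 z).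
Proof.
move=> [u Zu ->].
exists (2 - 9 * u + 45 * (u * (u + 1) / 2) + 12 * u ^+ 3); first by Z2_closure.
by rewrite /center_a /f1 /f_t; field.
Qed.

Lemma f1_disk_2_2 (z : rat) : disk2 2 2 z -> disk2 7 4 (f1 z).
Proof.
move=> [u Zu ->].
exists (- 9 * u + 27 * (u * (u + 1) / 2) + 12 * u ^+ 3); first by Z2_closure.
by rewrite /f1 /f_t; field.
Qed.

Lemma f1_disk_7_4 (z : rat) : disk2 7 4 z -> disk2 (center_a 0) 4 (f1 z).
Proof.
move=> [u Zu ->].
exists (50 + 378 * u + 936 * u ^+ 2 + 768 * u ^+ 3); first by Z2_closure.
by rewrite /center_a /f1 /f_t; field.
Qed.

Definition f1_trap (z : rat) : Prop :=
  (exists n, disk2 (center_a n) (2 * n + 4) z \/ disk2 (center_b n) (2 * n + 4) z)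
  \/ disk2 3 2 z \/ disk2 2 2 z \/ disk2 7 4 z.

Lemma f1_trap_stable (z : rat) : f1_trap z -> f1_trap (f1 z).
Proof.
have Z2_16 : Z2 ((27 * 5 - 7) / 8) by rewrite (_ : _ / _ = 16%:R); [exact: Z2_nat | field].
have Z2_23 : Z2 ((27 * 7 - 5) / 8) by rewrite (_ : _ / _ = 23%:R); [exact: Z2_nat | field].
case=> [[[|n] [Dz|Dz]]|[Dz|[Dz|Dz]]].
- by right; left; exact: f1_center_a0.
- by right; right; left; exact: f1_center_b0.
- by left; exists n; right; exact: (f1_center_descend _ _ _ _ (Z2_nat 5) Z2_16).
- by left; exists n; left; exact: (f1_center_descend _ _ _ _ (Z2_nat 7) Z2_23).
- by left; exists 0%N; left; exact: f1_disk_3_2.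
- by right; right; right; exact: f1_disk_2_2.
- by left; exists 0%N; left; exact: f1_disk_7_4.
Qed.

Lemma f1_trap_iter (n : nat) (z : rat) : f1_trap z -> f1_trap (iter n f1 z).
Proof. by move=> Tz; elim: n => //= n; apply: f1_trap_stable. Qed.

Lemma abs2_f1_trap (z : rat) : f1_trap z -> abs2 z <= 2.
Proof.
move=> Tz; apply: abs2_le2.
case: Tz => [[n [Dz|Dz]]|[Dz|[Dz|Dz]]]; apply: Z2_double_disk2 Dz;
  try exact: Z2_double_center (Z2_nat _); by Z2_closure.
Qed.

Theorem mainTheorem9 :
  forall q : nat -> rat, cauchy2 q ->
  (exists n : nat,
     in_cdisk2 q (center_a n) (radius n) \/ in_cdisk2 q (center_b n) (radius n)) ->
  bounded_orbit2 f1 q.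
Proof.
move=> q _ [n Dq].
have [N trap_q] : exists N, forall k, (N <= k)%N -> f1_trap (q k).
  by case: Dq => -[N DN]; exists N => k /DN /disk2_of_abs2_le Dk; left; exists n;
    [left | right].
exists 2; split => // m; exists N => k /trap_q.
by move/(f1_trap_iter m); exact: abs2_f1_trap.
Qed.
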